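(* Let $\underline{L}$ be a finite lattice and let $\underline{S}_1,\underline{S}_2$ be intervals of $\underline{L}$ that are dismantling for $\underline{L}$, with $\underline{S}_2\not\subseteq\underline{S}_1$. Then $\underline{S}_2\setminus\underline{S}_1$ is an interval of the lattice $\underline{L}\setminus\underline{S}_1$ (the set $L\setminus S_1$ with the restricted order) and it is dismantling for $\underline{L}\setminus\underline{S}_1$.
   Context: For $u\le v$ in a lattice $L$, $[u,v]=\{x\mid u\le x\le v\}$, $(v]=\{x\mid x\le v\}$, $[u)=\{x\mid u\le x\}$. An interval $[u,v]$ of $L$ is quasi-dismantling for $L$ if $u$ is supremum-prime in $(v]$ (for all $x,y\in(v]$, $u\le x\vee y$ implies $u\le x$ or $u\le y$) and $v$ is infimum-prime in $[u)$ (for all $x,y\in[u)$, $x\wedge y\le v$ implies $x\le v$ or $y\le v$); it is dismantling for $L$ if moreover $u\neq\bot$ and $v\neq\top$, the least and greatest elements of $L$. (If $[u,v]$ is dismantling for $L$, then $L\setminus[u,v]$ with the restricted order is a lattice.) *)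

From HB Require Import structures.
From mathcomp Require Import all_boot all_order.
Set Implicit Arguments. Unset Strict Implicit. Unset Printing Implicit Defensive.
Import Order.Theory.
Local Open Scope order_scope.

Section Dismantling.
Context {d : Order.disp_t} {T : finTBLatticeType d}.

Definition itv (u v : T) : {set T} := [set x | (u <= x) && (x <= v)].

Definition sup_prime_below (u v : T) : Prop :=
  forall x y : T, x <= v -> y <= v -> u <= x `|` y -> u <= x \/ u <= y.

Definition inf_prime_above (u v : T) : Prop :=
  forall x y : T, u <= x -> u <= y -> x `&` y <= v -> x <= v \/ y <= v.

Definition quasi_dismantling (u v : T) : Prop :=
  u <= v /\ sup_prime_below u v /\ inf_prime_above u v.

Definition dismantling (u v : T) : Prop :=
  quasi_dismantling u v /\ u != \bot /\ v != \top.

Definition is_sup_in (A : {set T}) (x y z : T) : Prop :=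
  [/\ z \in A, x <= z, y <= z & forall w, w \in A -> x <= w -> y <= w -> z <= w].

Definition is_inf_in (A : {set T}) (x y z : T) : Prop :=
  [/\ z \in A, z <= x, z <= y & forall w, w \in A -> w <= x -> w <= y -> w <= z].

Definition itv_in (A : {set T}) (u v : T) : {set T} :=
  [set x in A | (u <= x) && (x <= v)].

Definition sup_prime_below_in (A : {set T}) (u v : T) : Prop :=
  forall x y z : T, x \in A -> y \in A -> x <= v -> y <= v ->
    is_sup_in A x y z -> u <= z -> u <= x \/ u <= y.

Definition inf_prime_above_in (A : {set T}) (u v : T) : Prop :=
  forall x y z : T, x \in A -> y \in A -> u <= x -> u <= y ->
    is_inf_in A x y z -> z <= v -> x <= v \/ y <= v.

Definition is_bot_in (A : {set T}) (b : T) : Prop :=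
  b \in A /\ forall x, x \in A -> b <= x.

Definition is_top_in (A : {set T}) (t : T) : Prop :=
  t \in A /\ forall x, x \in A -> x <= t.

Definition quasi_dismantling_in (A : {set T}) (u v : T) : Prop :=
  [/\ u \in A, v \in A, u <= v, sup_prime_below_in A u v & inf_prime_above_in A u v].

Definition dismantling_in (A : {set T}) (u v : T) : Prop :=
  [/\ quasi_dismantling_in A u v, ~ is_bot_in A u & ~ is_top_in A v].

End Dismantling.

(* Removing an interval [S1] whose bounds are supremum- resp. infimum-prime
   leaves a subset [A] of [L] closed under the joins and meets of [L], so [A]
   is a sublattice and its joins and meets are those of [L]. Hence
   [S2 \ S1 = A ∩ S2] is closed under joins and meets; being finite and
   nonempty it is the interval [u, v] of [A] between its least and greatest
   elements, and the primeness of the bounds of [S2] restricts to [u] and [v].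
   Finally [A] contains the bottom and top of [L], which lie strictly below
   [u] and above [v]. *)

From HB Require Import structures.
From mathcomp Require Import all_boot all_order.
Import Order.Theory.

Set Implicit Arguments.
Unset Strict Implicit.
Unset Printing Implicit Defensive.
Local Open Scope order_scope.

Lemma meet_closed_least d (L : finTBLatticeType d) (D : {set L}) :
  D != set0 -> {in D &, forall x y, x `&` y \in D} ->
  exists2 u, u \in D & {in D, forall x, u <= x}.
Proof.
case/set0Pn=> x0 Dx0 DI; exists (\meet_(x in D) x); last first.
  by move=> x Dx; exact: meets_inf.
(* The empty meet [\top] need not lie in [D], so induct on [x0 `&` _]. *)
have <- : x0 `&` \meet_(x in D) x = \meet_(x in D) x.
  by apply/meet_idPr; exact: meets_inf.
apply: (big_ind (fun y => x0 `&` y \in D)) => [|a b Da Db|x Dx].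
- by rewrite meetx1.
- by rewrite -(meetxx x0) meetACA; exact: DI.
- exact: DI.
Qed.

Lemma join_closed_greatest d (L : finTBLatticeType d) (D : {set L}) :
  D != set0 -> {in D &, forall x y, x `|` y \in D} ->
  exists2 v, v \in D & {in D, forall x, x <= v}.
Proof. exact: (@meet_closed_least _ L^d). Qed.

Section Dismantling.
Context {d : Order.disp_t} {T : finTBLatticeType d}.
Implicit Types (A : {set T}) (u v x y z : T).

Lemma mem_itv u v x : (x \in itv u v) = (u <= x <= v).
Proof. by rewrite inE. Qed.

Lemma itv_meet_closed u v : {in itv u v &, forall x y, x `&` y \in itv u v}.
Proof.
move=> x y; rewrite !mem_itv => /andP[ux xv] /andP[uy _].
by rewrite lexI ux uy (le_trans (leIl x y) xv).
Qed.

Lemma itv_join_closed u v : {in itv u v &, forall x y, x `|` y \in itv u v}.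
Proof.
move=> x y; rewrite !mem_itv => /andP[ux xv] /andP[_ yv].
by rewrite leUx xv yv (le_trans ux (leUl x y)).
Qed.

Lemma sup_prime_below_setC_join_closed u v : sup_prime_below u v ->
  {in ~: itv u v &, forall x y, x `|` y \in ~: itv u v}.
Proof.
move=> sp x y; rewrite !inE => xS yS; apply/negP; rewrite leUx => /and3P[uxy xv yv].
by case: (sp x y xv yv uxy) => [ux | uy]; [move: xS; rewrite ux xv | move: yS; rewrite uy yv].
Qed.

Lemma inf_prime_above_setC_meet_closed u v : inf_prime_above u v ->
  {in ~: itv u v &, forall x y, x `&` y \in ~: itv u v}.
Proof.
move=> ip x y; rewrite !inE => xS yS; apply/negP; rewrite lexI => /andP[/andP[ux uy] xyv].
by case: (ip x y ux uy xyv) => [xv | yv]; [move: xS; rewrite ux xv | move: yS; rewrite uy yv].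
Qed.

Lemma is_sup_in_joinE A x y z : {in A &, forall x y, x `|` y \in A} ->
  x \in A -> y \in A -> is_sup_in A x y z -> z = x `|` y.
Proof.
move=> AU xA yA [_ xz yz zmin].
by apply/le_anti; rewrite zmin ?AU ?leUl ?leUr //= leUx xz yz.
Qed.

Lemma is_inf_in_meetE A x y z : {in A &, forall x y, x `&` y \in A} ->
  x \in A -> y \in A -> is_inf_in A x y z -> z = x `&` y.
Proof.
move=> AI xA yA [_ zx zy zmax].
by apply/le_anti; rewrite zmax ?AI ?leIl ?leIr //= lexI zx zy.
Qed.

Lemma is_bot_in_bot A u : \bot \in A -> is_bot_in A u -> u = \bot.
Proof. by move=> bA [_ umin]; apply/eqP; rewrite -lex0 umin. Qed.

Lemma is_top_in_top A v : \top \in A -> is_top_in A v -> v = \top.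
Proof. by move=> tA [_ vmax]; apply/eqP; rewrite -le1x vmax. Qed.

Section Restriction.
Variables (A : {set T}) (u2 v2 u v : T).
Hypotheses (AI : {in A &, forall x y, x `&` y \in A})
           (AU : {in A &, forall x y, x `|` y \in A}).
Hypotheses (Du : u \in A :&: itv u2 v2) (Dv : v \in A :&: itv u2 v2).
Hypotheses (u_least : {in A :&: itv u2 v2, forall x, u <= x})
           (v_greatest : {in A :&: itv u2 v2, forall x, x <= v}).

Let u2u : u2 <= u. Proof. by move: Du; rewrite inE mem_itv => /and3P[]. Qed.
Let vv2 : v <= v2. Proof. by move: Dv; rewrite inE mem_itv => /and3P[]. Qed.

Lemma itv_in_least_greatest : itv_in A u v = A :&: itv u2 v2.
Proof.
apply/setP=> x; rewrite [in LHS]inE; apply/andP/idP => [[xA /andP[ux xv]] | Dx].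
  by rewrite inE xA mem_itv (le_trans u2u ux) (le_trans xv vv2).
by split; [case/setIP: Dx | rewrite u_least ?v_greatest].
Qed.

Lemma sup_prime_below_in_least : sup_prime_below u2 v2 -> sup_prime_below_in A u v.
Proof.
move=> sp x y z xA yA xv yv zsup uz; rewrite (is_sup_in_joinE AU xA yA zsup) in uz.
have [xv2 yv2] := (le_trans xv vv2, le_trans yv vv2).
case: (sp x y xv2 yv2 (le_trans u2u uz)) => [u2x | u2y]; [left | right];
  by apply: u_least; rewrite !inE ?xA ?yA ?u2x ?u2y ?xv2 ?yv2.
Qed.

Lemma inf_prime_above_in_greatest : inf_prime_above u2 v2 -> inf_prime_above_in A u v.
Proof.
move=> ip x y z xA yA ux uy zinf zv; rewrite (is_inf_in_meetE AI xA yA zinf) in zv.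
have [u2x u2y] := (le_trans u2u ux, le_trans u2u uy).
case: (ip x y u2x u2y (le_trans zv vv2)) => [xv2 | yv2]; [left | right];
  by apply: v_greatest; rewrite !inE ?xA ?yA ?u2x ?u2y ?xv2 ?yv2.
Qed.

Lemma dismantling_in_least_greatest : \bot \in A -> \top \in A ->
  dismantling u2 v2 -> dismantling_in A u v.
Proof.
move=> bA tA [[_ [sp ip]] [b2 t2]]; split.
- split; [by case/setIP: Du | by case/setIP: Dv | exact: u_least | |].
  + exact: sup_prime_below_in_least.
  + exact: inf_prime_above_in_greatest.
- by move/(is_bot_in_bot bA)=> u0; move: u2u; rewrite u0 lex0 (negbTE b2).
- by move/(is_top_in_top tA)=> v1; move: vv2; rewrite v1 le1x (negbTE t2).
Qed.

End Restriction.
End Dismantling.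

Theorem lemma5 (d : Order.disp_t) (T : finTBLatticeType d) (u1 v1 u2 v2 : T) :
  dismantling u1 v1 -> dismantling u2 v2 ->
  ~~ (itv u2 v2 \subset itv u1 v1) ->
  exists u v : T,
    itv_in (~: itv u1 v1) u v = itv u2 v2 :\: itv u1 v1 /\
    dismantling_in (~: itv u1 v1) u v.
Proof.
move=> [[_ [sp1 ip1]] [b1 t1]] dis2 not_sub.
set A := ~: itv u1 v1; set D := A :&: itv u2 v2.
have AI := inf_prime_above_setC_meet_closed ip1.
have AU := sup_prime_below_setC_join_closed sp1.
have DI : {in D &, forall x y, x `&` y \in D}.
  by move=> x y /setIP[xA xS] /setIP[yA yS]; rewrite inE AI ?itv_meet_closed.
have DU : {in D &, forall x y, x `|` y \in D}.
  by move=> x y /setIP[xA xS] /setIP[yA yS]; rewrite inE AU ?itv_join_closed.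
have D0 : D != set0 by rewrite /D setIC -setDE setD_eq0.
have [u Du u_least] := meet_closed_least D0 DI.
have [v Dv v_greatest] := join_closed_greatest D0 DU.
exists u, v; rewrite setDE setIC (itv_in_least_greatest Du Dv u_least v_greatest).
split=> //; apply: (dismantling_in_least_greatest AI AU Du Dv u_least v_greatest _ _ dis2).
- by rewrite !inE lex0 (negbTE b1).
- by rewrite !inE le1x (negbTE t1) andbF.
Qed.
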